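(* Let $r_n$ ($n\ge 0$) denote the parity of the number of runs of $1$'s in the binary representation of $n$, and for $k\ge 0$ let $R_k$ denote the finite word $r_0r_1\cdots r_{2^k-1}$ consisting of the first $2^k$ terms. Then $R_1=01$, and for every $k\ge 1$ we have the concatenation $R_{k+1}=R_kS_k$, where $S_k$ is the word obtained from $R_k$ by replacing each of its first $2^{k-1}$ letters $x$ by $1-x$ and leaving the remaining $2^{k-1}$ letters unchanged.
   Context: A run of $1$'s in the binary representation of $n$ is a maximal block of consecutive binary digits equal to $1$; parity means the number modulo $2$, so $r_n\in\{0,1\}$. *)

From mathcomp Require Import all_boot.
Set Implicit Arguments. Unset Strict Implicit. Unset Printing Implicit Defensive.

(* binary digits of n, least significant first; bin 0 = [::] *)
Fixpoint bin_aux (fuel n : nat) : seq bool :=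
  match fuel with
  | 0 => [::]
  | f.+1 => if n == 0 then [::] else odd n :: bin_aux f n./2
  end.
Definition bin (n : nat) : seq bool := bin_aux n n.

(* number of maximal blocks of consecutive trues in a word:
   count positions holding true that are followed by false or by the end *)
Fixpoint runs1 (s : seq bool) : nat :=
  match s with
  | [::] => 0
  | b :: t => (b && ~~ head false t) + runs1 t
  end.

Definition r (n : nat) : nat := odd (runs1 (bin n)).

Definition Rword (k : nat) : seq nat := mkseq r (2 ^ k).

Definition Sword (k : nat) : seq nat :=
  [seq 1 - x | x <- take (2 ^ k.-1) (Rword k)] ++ drop (2 ^ k.-1) (Rword k).

From mathcomp Require Import all_boot.

(* Adding the leading bit 2^(k+1) to m < 2^(k+1) creates a new run of 1's
   exactly when bit k of m is 0, i.e. when m < 2^k; otherwise the new bit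
   just lengthens the topmost run.  Hence r_(2^(k+1) + m) = 1 - r_m for
   m < 2^k and r_(2^(k+1) + m) = r_m for 2^k <= m < 2^(k+1), which is the
   claimed relation between the two halves of R_(k+2). *)

Section Mkseq.
Variable T : Type.

Lemma mkseqD (f : nat -> T) m n :
  mkseq f (m + n) = mkseq f m ++ mkseq (f \o addn m) n.
Proof.
by rewrite /mkseq iotaD map_cat add0n -[in iota m _](addn0 m) iotaDl -map_comp.
Qed.

Lemma eq_in_mkseq (f g : nat -> T) n :
  (forall i, i < n -> f i = g i) -> mkseq f n = mkseq g n.
Proof. by move=> efg; apply/eq_in_map => i; rewrite mem_iota => /efg. Qed.

Lemma map_mkseq (U : Type) (f : T -> U) (g : nat -> T) n :
  map f (mkseq g n) = mkseq (f \o g) n.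
Proof. by rewrite /mkseq -map_comp. Qed.

End Mkseq.

Lemma expn2S k : 2 ^ k.+1 = 2 ^ k + 2 ^ k.
Proof. by rewrite expnS mul2n addnn. Qed.

Lemma eq_bin_aux f g n : n <= f -> n <= g -> bin_aux f n = bin_aux g n.
Proof.
elim: f g n => [|f IH] [|g] n //=.
- by rewrite leqn0 => /eqP -> _.
- by move=> _; rewrite leqn0 => /eqP ->.
move=> nf ng; case: eqP => // /eqP n0; congr (_ :: _).
have half_lt : n./2 < n by rewrite -divn2 ltn_Pdiv // lt0n.
by apply: IH; rewrite -ltnS; apply: leq_trans half_lt _.
Qed.

Lemma binE n : bin n = if n == 0 then [::] else odd n :: bin n./2.
Proof.
case: n => [|n] //; rewrite {1}/bin /=; congr (_ :: _).
by apply: eq_bin_aux => //; rewrite leq_uphalf_double -addnn leq_addr.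
Qed.

Definition runs (n : nat) : nat := runs1 (bin n).

Lemma runs_halfE n : runs n = (odd n && ~~ odd n./2) + runs n./2.
Proof.
rewrite /runs {1}binE; case: eqP => [->|_] //=.
by rewrite binE; case: eqP => [->|].
Qed.

Lemma runs_pow2D k m :
  m < 2 ^ k.+1 -> runs (2 ^ k.+1 + m) = runs m + (m < 2 ^ k).
Proof.
elim: k m => [|k IH] m; first by case: m => [|[|m]].
move=> lt_m; rewrite runs_halfE (runs_halfE m).
have -> : (2 ^ k.+2 + m)./2 = 2 ^ k.+1 + m./2.
  by rewrite expnS mul2n halfD odd_double doubleK.
rewrite IH; last by rewrite ltn_half_double -mul2n -expnS.
rewrite ltn_half_double -mul2n -expnS.
by rewrite !oddD !oddX addnA.
Qed.

Lemma r_pow2D k m :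
  m < 2 ^ k.+1 -> r (2 ^ k.+1 + m) = if m < 2 ^ k then 1 - r m else r m.
Proof.
by move=> lt_m; rewrite /r -/(runs _) runs_pow2D // oddD; case: (m < _); case: odd.
Qed.

Lemma Rword_cat k : Rword k.+1 = Rword k ++ mkseq (r \o addn (2 ^ k)) (2 ^ k).
Proof. by rewrite /Rword expn2S mkseqD. Qed.

Theorem theorem2 :
  Rword 1 = [:: 0; 1] /\
  (forall k : nat, 1 <= k -> Rword k.+1 = Rword k ++ Sword k).
Proof.
split=> // -[|k] // _.
rewrite Rword_cat; congr (_ ++ _).
rewrite /Sword /= Rword_cat take_size_cat ?size_mkseq // drop_size_cat ?size_mkseq //.
rewrite map_mkseq [X in mkseq _ X]expn2S mkseqD.
congr (_ ++ _); apply: eq_in_mkseq => m lt_m /=.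
- by rewrite r_pow2D ?lt_m // expn2S ltn_addl.
- rewrite r_pow2D; last by rewrite expn2S ltn_add2l.
  by rewrite ltnNge leq_addr.
Qed.
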